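(* Let $X\in[0,1]^{N\times N}$, let $Q_{2D}(X)$ be the two-dimensional first-order $\Sigma\Delta$ quantization of $X$ with an alphabet of step size $\delta$, whose state matrix $u$ satisfies $X-Q_{2D}(X)=DuD^T$ and $\|u\|_{\max}\leq\delta/2$, and let $\hat X$ be a solution to $$\min_{Z\in\mathbb{R}^{N\times N}}\|D^TZ\|_1+\|ZD\|_1\quad\text{subject to}\quad\|D^{-1}(Z-Q_{2D}(X))(D^{-1})^T\|_{\max}\leq\delta/2.$$ Then for every integer $1\leq s\leq N^2$, $$\|\hat X-X\|_F\leq C\Big(\sqrt{s}\sqrt{\delta}+\sqrt{\sigma_s(D^TX)}+\sqrt{\sigma_s(XD)}\Big)\sqrt{\delta},$$ where $C$ is a constant independent of $X$.
   Context: $D$ is the $N\times N$ matrix with $1$ on the diagonal, $-1$ on the subdiagonal, $0$ elsewhere. For matrices, $\|\cdot\|_1$ is the entrywise $\ell_1$ norm and $\|\cdot\|_{\max}$ the largest absolute entry; for a matrix $Z$, $\sigma_s(Z)$ is the $\ell_1$ distance between the vectorization of $Z$ and its best $s$-term approximation. The two-dimensional first-order $\Sigma\Delta$ quantization with a finite alphabet $\mathcal{A}$: with $u_{i,0}=u_{0,j}=0$, for $i,j\geq1$ set $q_{i,j}=Q_{\mathcal{A}}(u_{i,j-1}+u_{i-1,j}-u_{i-1,j-1}+X_{i,j})$ and $u_{i,j}=u_{i,j-1}+u_{i-1,j}-u_{i-1,j-1}+X_{i,j}-q_{i,j}$, $Q_{\mathcal{A}}(z)$ a nearest element of $\mathcal{A}$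 to $z$; $Q_{2D}(X)=q$. The alphabet is assumed such that $\|u\|_{\max}\leq\delta/2$. *)

From HB Require Import structures.
From mathcomp Require Import all_boot all_order all_algebra.
From mathcomp Require Import reals.
Set Implicit Arguments. Unset Strict Implicit. Unset Printing Implicit Defensive.
Import Order.TTheory GRing.Theory Num.Theory.
Local Open Scope ring_scope.

Section Defs.
Variable R : realType.

Definition Dmx (N : nat) : 'M[R]_N :=
  \matrix_(i, j) (if i == j then 1 else if (i : nat) == j.+1 then -1 else 0).

Definition l1 (m n : nat) (Z : 'M[R]_(m, n)) : R := \sum_i \sum_j `|Z i j|.

Definition maxnorm (m n : nat) (Z : 'M[R]_(m, n)) : R :=
  \big[Order.max/0]_i \big[Order.max/0]_j `|Z i j|.

Definition frob (m n : nat) (Z : 'M[R]_(m, n)) : R :=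
  Num.sqrt (\sum_i \sum_j Z i j ^+ 2).

(* sigma_s(Z): l1 distance from vec(Z) to its best s-term approximation,
   i.e. min over index sets S with |S| <= s of the l1 mass off S. *)
Definition sigma_s (m n : nat) (s : nat) (Z : 'M[R]_(m, n)) : R :=
  \big[Order.min/l1 Z]_(S : {set 'I_m * 'I_n} | (#|S| <= s)%N)
     \sum_(k in ~: S) `|Z k.1 k.2|.

Definition alphabet_step (A : seq R) (delta : R) : Prop :=
  exists (a0 : R) (m : nat), A = [seq a0 + k%:R * delta | k <- iota 0 m.+1].

Definition nearest (A : seq R) (v z : R) : Prop :=
  z \in A /\ forall a, a \in A -> `|v - z| <= `|v - a|.

(* 1-based access to the state with zero boundary u_{i,0} = u_{0,j} = 0 *)
Definition uget (N : nat) (u : 'M[R]_N) (a b : nat) : R :=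
  if (0 < a)%N && (0 < b)%N then
    match @insub _ (fun k => (k < N)%N) 'I_N a.-1,
          @insub _ (fun k => (k < N)%N) 'I_N b.-1 with
    | Some i, Some j => u i j
    | _, _ => 0
    end
  else 0.

(* q = Q_2D(X) with state matrix u: entry (i,j) (0-based) is entry (i+1,j+1)
   of the paper's 1-based recursion. *)
Definition sigma_delta_2D (N : nat) (A : seq R) (X q u : 'M[R]_N) : Prop :=
  forall i j : 'I_N,
    let v := uget u i j.+1 + uget u i.+1 j - uget u i j + X i j in
    nearest A v (q i j) /\ u i j = v - q i j.

Definition feasible (N : nat) (delta : R) (q Z : 'M[R]_N) : Prop :=
  maxnorm (invmx (Dmx N) *m (Z - q) *m (invmx (Dmx N))^T) <= delta / 2.

Definition objective (N : nat) (Z : 'M[R]_N) : R :=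
  l1 ((Dmx N)^T *m Z) + l1 (Z *m Dmx N).

End Defs.

(* Let E = Xhat - X.  The recursion gives X - q = D u D^T, so X is feasible and
   W = D^-1 E D^-T has entries of size at most delta; hence
   |E|_F^2 = <D^T E D, W> <= delta (|D^T E|_1 + |E D|_1).  Since Xhat minimizes
   the objective and X is feasible, the cone inequality of compressed sensing
   bounds |D^T E|_1 + |E D|_1 by
   2 sqrt s (|D^T E|_F + |E D|_F) + 2 (sigma_s(D^T X) + sigma_s(X D)),
   and |D^T E|_F, |E D|_F <= 2 |E|_F.  Solving the resulting quadratic
   inequality in |E|_F gives the bound with C = 8. *)

From HB Require Import structures.
From mathcomp Require Import all_boot all_order all_algebra.
From mathcomp Require Import reals.
From mathcomp Require Import ring lra.
Import Order.TTheory GRing.Theory Num.Theory.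
Local Open Scope ring_scope.
Set Implicit Arguments. Unset Strict Implicit. Unset Printing Implicit Defensive.

Lemma sqr_sum_weighted_le (R : realDomainType) (T : finType) (w x : T -> R) :
  (forall i, 0 <= w i) ->
  (\sum_i w i * x i) ^+ 2 <= (\sum_i w i) * \sum_i w i * x i ^+ 2.
Proof.
move=> w_ge0.
(* Lagrange's identity: the gap is half of the nonnegative double sum below. *)
have gapE : \sum_i \sum_j w i * w j * (x i - x j) ^+ 2 =
    2%:R * ((\sum_i w i) * (\sum_i w i * x i ^+ 2) - (\sum_i w i * x i) ^+ 2).
  have sqE : (\sum_i w i * x i) ^+ 2 = \sum_i \sum_j (w i * x i) * (w j * x j).
    by rewrite expr2 mulr_suml; apply: eq_bigr => i _; rewrite mulr_sumr.
  have prodE : (\sum_i w i) * (\sum_i w i * x i ^+ 2) =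
      \sum_i \sum_j w j * (w i * x i ^+ 2).
    by rewrite mulr_sumr; apply: eq_bigr => i _; rewrite mulr_suml.
  have prodE' : (\sum_i w i) * (\sum_i w i * x i ^+ 2) =
      \sum_i \sum_j w i * (w j * x j ^+ 2).
    by rewrite prodE exchange_big.
  have -> : \sum_i \sum_j w i * w j * (x i - x j) ^+ 2 =
      \sum_i \sum_j w j * (w i * x i ^+ 2) + \sum_i \sum_j w i * (w j * x j ^+ 2)
      - 2%:R * \sum_i \sum_j (w i * x i) * (w j * x j).
    rewrite mulr_sumr -!big_split -sumrB /=; apply: eq_bigr => i _.
    by rewrite mulr_sumr -!big_split -sumrB /=; apply: eq_bigr => j _; ring.
  by rewrite -prodE -prodE' -sqE; ring.
have : 0 <= \sum_i \sum_j w i * w j * (x i - x j) ^+ 2.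
  by apply: sumr_ge0 => i _; apply: sumr_ge0 => j _; rewrite mulr_ge0 ?sqr_ge0 ?mulr_ge0.
by rewrite gapE pmulr_rge0 ?subr_ge0.
Qed.

Lemma le_of_sqr_le_linear (R : realDomainType) (a b c : R) :
  0 <= a -> 0 <= b -> 0 <= c -> a ^+ 2 <= b * a + c ^+ 2 -> a <= b + c.
Proof.
move=> a0 b0 c0 h; rewrite leNgt; apply/negP => lt.
have : 0 < (a - b - c) * a by rewrite mulr_gt0 //; lra.
have : 0 <= c * (a - c) by rewrite mulr_ge0 //; lra.
nra.
Qed.

Lemma sqr_le_quadratic_bound (R : realDomainType) (a r d p p' : R) :
  0 <= a -> 0 <= r -> 0 <= d -> 0 <= p -> 0 <= p' ->
  a ^+ 2 <= d ^+ 2 * (8%:R * r * a + 2%:R * (p ^+ 2 + p' ^+ 2)) ->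
  a <= 8%:R * (r * d + p + p') * d.
Proof.
move=> a0 r0 d0 p0 p'0 a_le.
have : a <= 8%:R * r * d ^+ 2 + 2%:R * d * (p + p').
  apply: le_of_sqr_le_linear; rewrite ?mulr_ge0 ?addr_ge0 //.
  apply: le_trans a_le _.
  have := mulr_ge0 (sqr_ge0 d) (mulr_ge0 p0 p'0); nra.
have := mulr_ge0 d0 (addr_ge0 p0 p'0); nra.
Qed.

Lemma sum_pred_subsingleton_le1 (R : numDomainType) (T : finType) (P : pred T) :
  {in P &, forall x y, x = y} -> \sum_j (P j)%:R <= 1 :> R.
Proof.
move=> uP; case: (pickP P) => [x Px|P0]; last by rewrite big1 // => y _; rewrite P0.
rewrite (bigD1 x) //= Px big1 ?addr0 // => y nyx.
by case Py: (P y) => //; move: nyx; rewrite (uP _ _ Py Px) eqxx.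
Qed.

Lemma exchange_big3 (V : nmodType) (I J K : finType) (F : I -> J -> K -> V) :
  \sum_i \sum_j \sum_k F i j k = \sum_k \sum_j \sum_i F i j k.
Proof.
rewrite exchange_big /=; under eq_bigr do rewrite exchange_big /=.
by rewrite exchange_big.
Qed.

Section EntrywiseNorms.
Variable R : realType.

Lemma frob_sqr m n (Z : 'M[R]_(m, n)) : frob Z ^+ 2 = \sum_i \sum_j Z i j ^+ 2.
Proof.
by rewrite sqr_sqrtr // sumr_ge0 // => i _; rewrite sumr_ge0 // => j _; apply: sqr_ge0.
Qed.

Lemma frob_ge0 m n (Z : 'M[R]_(m, n)) : 0 <= frob Z.
Proof. exact: sqrtr_ge0. Qed.

Lemma l1_trmx m n (Z : 'M[R]_(m, n)) : l1 Z^T = l1 Z.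
Proof.
by rewrite /l1 exchange_big; apply: eq_bigr => i _; apply: eq_bigr => j _; rewrite mxE.
Qed.

Lemma frob_trmx m n (Z : 'M[R]_(m, n)) : frob Z^T = frob Z.
Proof.
rewrite /frob exchange_big; congr Num.sqrt.
by apply: eq_bigr => i _; apply: eq_bigr => j _; rewrite mxE.
Qed.

Lemma frob_sqr_mxtrace m n (Z : 'M[R]_(m, n)) : frob Z ^+ 2 = \tr (Z^T *m Z).
Proof.
rewrite frob_sqr /mxtrace exchange_big; apply: eq_bigr => j _.
by rewrite mxE; apply: eq_bigr => i _; rewrite mxE expr2.
Qed.

Lemma normr_le_maxnorm m n (Z : 'M[R]_(m, n)) i j : `|Z i j| <= maxnorm Z.
Proof. by rewrite /maxnorm (bigD1 i) //= (bigD1 j) //= !le_max lexx. Qed.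

Lemma normr_mxtrace_mul_le n (M W : 'M[R]_n) d :
  (forall i j, `|W i j| <= d) -> `|\tr (M^T *m W)| <= d * l1 M.
Proof.
move=> W_le; rewrite /mxtrace /l1 exchange_big mulr_sumr.
apply: le_trans (ler_norm_sum _ _ _) _; apply: ler_sum => i _.
rewrite mxE mulr_sumr; apply: le_trans (ler_norm_sum _ _ _) _; apply: ler_sum => j _.
by rewrite mxE normrM mulrC ler_wpM2r.
Qed.

Lemma l1_split m n (Z : 'M[R]_(m, n)) (S : {set 'I_m * 'I_n}) :
  l1 Z = \sum_(k in S) `|Z k.1 k.2| + \sum_(k in ~: S) `|Z k.1 k.2|.
Proof.
rewrite /l1 pair_bigA (bigID (mem S)) /=; congr (_ + _).
by apply: eq_bigl => k; rewrite in_setC.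
Qed.

Lemma sigma_s_attained m n s (Z : 'M[R]_(m, n)) :
  exists2 S : {set 'I_m * 'I_n}, (#|S| <= s)%N &
    sigma_s s Z = \sum_(k in ~: S) `|Z k.1 k.2|.
Proof.
rewrite /sigma_s (bigmin_eq_arg _ set0) ?cards0 //.
  by case: arg_minP; rewrite ?cards0 // => S S_le _; exists S.
by move=> S _; rewrite (l1_split Z S) lerDr sumr_ge0.
Qed.

Lemma sigma_s_ge0 m n s (Z : 'M[R]_(m, n)) : 0 <= sigma_s s Z.
Proof. by have [S _ ->] := sigma_s_attained s Z; rewrite sumr_ge0. Qed.

Lemma sum_on_le_frob m n (Z : 'M[R]_(m, n)) (S : {set 'I_m * 'I_n}) :
  \sum_(k in S) `|Z k.1 k.2| <= Num.sqrt #|S|%:R * frob Z.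
Proof.
have sumS : \sum_(k in S) `|Z k.1 k.2| = \sum_k (k \in S)%:R * `|Z k.1 k.2|.
  by rewrite big_mkcond /=; apply: eq_bigr => k _; case: (k \in S); rewrite ?mul1r ?mul0r.
have cardS : \sum_k (k \in S)%:R = #|S|%:R :> R.
  by rewrite -sum1_card natr_sum [RHS]big_mkcond; apply: eq_bigr => k _; case: (k \in S).
rewrite -(ler_pXn2r (n := 2)) ?nnegrE ?sumr_ge0 ?mulr_ge0 ?sqrtr_ge0 ?frob_ge0 //.
rewrite exprMn sqr_sqrtr // frob_sqr sumS -cardS.
apply: le_trans (sqr_sum_weighted_le _ (fun k => ler0n _ (k \in S))) _.
rewrite ler_wpM2l ?sumr_ge0 // pair_bigA; apply: ler_sum => k _.
by case: (k \in S); rewrite ?mul1r ?mul0r ?sqr_ge0 ?real_normK ?num_real.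
Qed.

Lemma l1_le_cone m n (V H : 'M[R]_(m, n)) (S : {set 'I_m * 'I_n}) :
  l1 H <= l1 (V + H) - l1 V + 2%:R * \sum_(k in S) `|H k.1 k.2|
          + 2%:R * \sum_(k in ~: S) `|V k.1 k.2|.
Proof.
rewrite (l1_split H S) (l1_split (V + H) S) (l1_split V S).
have onS : \sum_(k in S) `|V k.1 k.2| <=
    \sum_(k in S) `|(V + H) k.1 k.2| + \sum_(k in S) `|H k.1 k.2|.
  rewrite -big_split /=; apply: ler_sum => k _; rewrite mxE.
  by have := ler_normB (V k.1 k.2 + H k.1 k.2) (H k.1 k.2); rewrite addrK.
have offS : \sum_(k in ~: S) `|H k.1 k.2| <=
    \sum_(k in ~: S) `|(V + H) k.1 k.2| + \sum_(k in ~: S) `|V k.1 k.2|.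
  rewrite -big_split /=; apply: ler_sum => k _; rewrite mxE.
  by have := ler_normB (V k.1 k.2 + H k.1 k.2) (V k.1 k.2); rewrite addrAC subrr add0r.
lra.
Qed.

Lemma l1_le_cone_sigma m n (V H : 'M[R]_(m, n)) s :
  l1 H <= l1 (V + H) - l1 V + 2%:R * Num.sqrt s%:R * frob H + 2%:R * sigma_s s V.
Proof.
have [S S_le ->] := sigma_s_attained s V.
have onS : \sum_(k in S) `|H k.1 k.2| <= Num.sqrt s%:R * frob H.
  apply: le_trans (sum_on_le_frob H S) _.
  by rewrite ler_wpM2r ?frob_ge0 // ler_wsqrtr // ler_nat.
have := l1_le_cone V H S; lra.
Qed.

Section AbsSumBounds.
Variables (n : nat) (B : 'M[R]_n) (c : R).
Hypothesis row_sum_le : forall k, \sum_i `|B k i| <= c.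

Lemma l1_trmx_mul_le m (Z : 'M[R]_(n, m)) : l1 (B^T *m Z) <= c * l1 Z.
Proof.
have entry_le i j : `|(B^T *m Z) i j| <= \sum_k `|B k i| * `|Z k j|.
  rewrite mxE; apply: le_trans (ler_norm_sum _ _ _) _.
  by apply: ler_sum => k _; rewrite mxE normrM.
apply: le_trans (ler_sum _ (fun i _ => ler_sum _ (fun j _ => entry_le i j))) _.
rewrite exchange_big3 /l1 mulr_sumr; apply: ler_sum => k _.
rewrite mulr_sumr; apply: ler_sum => j _.
by rewrite -mulr_suml ler_wpM2r.
Qed.

Hypothesis col_sum_le : forall i, \sum_k `|B k i| <= c.

(* Schur's test: the row and column sums bound the Frobenius operator norm. *)
Lemma frob_trmx_mul_le m (Z : 'M[R]_(n, m)) : 0 <= c -> frob (B^T *m Z) <= c * frob Z.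
Proof.
move=> c_ge0.
have entry_le i j : (B^T *m Z) i j ^+ 2 <= c * \sum_k `|B k i| * Z k j ^+ 2.
  have norm_le : `|(B^T *m Z) i j| <= \sum_k `|B k i| * `|Z k j|.
    rewrite mxE; apply: le_trans (ler_norm_sum _ _ _) _.
    by apply: ler_sum => k _; rewrite mxE normrM.
  have : `|(B^T *m Z) i j| ^+ 2 <= (\sum_k `|B k i| * `|Z k j|) ^+ 2.
    by rewrite ler_pXn2r ?nnegrE ?normr_ge0 ?(le_trans _ norm_le).
  rewrite real_normK ?num_real // => /le_trans; apply.
  apply: le_trans (sqr_sum_weighted_le _ (fun k => normr_ge0 (B k i))) _.
  under [X in _ * X <= _]eq_bigr do rewrite real_normK ?num_real //.
  by rewrite ler_wpM2r ?sumr_ge0 // => k _; rewrite mulr_ge0 ?sqr_ge0.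
rewrite -(ler_pXn2r (n := 2)) ?nnegrE ?mulr_ge0 ?frob_ge0 // exprMn !frob_sqr.
apply: le_trans (ler_sum _ (fun i _ => ler_sum _ (fun j _ => entry_le i j))) _.
under eq_bigr do rewrite -mulr_sumr.
rewrite -mulr_sumr expr2 -mulrA ler_wpM2l // exchange_big3.
rewrite mulr_sumr; apply: ler_sum => k _; rewrite mulr_sumr; apply: ler_sum => j _.
by rewrite -mulr_suml ler_wpM2r ?sqr_ge0.
Qed.

End AbsSumBounds.

End EntrywiseNorms.

Section DifferenceMatrix.
Variables (R : realType) (N : nat).
Local Notation D := (Dmx R N).

Lemma DmxE (k m : 'I_N) : D k m = (k == m)%:R - ((k : nat) == m.+1)%:R.
Proof.
rewrite mxE; have [->|_] := eqVneq k m; first by rewrite ltn_eqF // subr0.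
by case: ifP => _ /=; ring.
Qed.

Lemma Dmx_telescope (G : nat -> R) (k : 'I_N) :
  G 0%N = 0 -> \sum_m D k m * G m.+1 = G k.+1 - G k.
Proof.
move=> G0; under eq_bigr do rewrite DmxE mulrBl.
rewrite sumrB (bigD1 k) //= eqxx mul1r big1 ?addr0 => [|m /negbTE]; last first.
  by rewrite eq_sym => ->; rewrite mul0r.
congr (_ - _); case: k => [[|k] lt_k] /=.
  by rewrite G0 big1 // => m _; rewrite mul0r.
rewrite (bigD1 (Ordinal (ltnW lt_k))) //= eqxx mul1r big1 ?addr0 // => m.
by rewrite -(inj_eq val_inj) /= eqSS eq_sym => /negbTE ->; rewrite mul0r.
Qed.

Lemma normr_Dmx_le (k m : 'I_N) : `|D k m| <= (k == m)%:R + ((k : nat) == m.+1)%:R.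
Proof. by rewrite DmxE (le_trans (ler_normB _ _)) ?normr_nat. Qed.

Lemma Dmx_row_sum_le (k : 'I_N) : \sum_m `|D k m| <= 2%:R.
Proof.
apply: le_trans (ler_sum _ (fun m _ => normr_Dmx_le k m)) _.
rewrite big_split /= -[2%:R]/(1 + 1 : R) lerD //; apply: sum_pred_subsingleton_le1.
  by move=> x y /eqP <- /eqP.
by move=> x y /eqP -> /eqP [] /val_inj.
Qed.

Lemma Dmx_col_sum_le (k : 'I_N) : \sum_m `|D m k| <= 2%:R.
Proof.
apply: le_trans (ler_sum _ (fun m _ => normr_Dmx_le m k)) _.
rewrite big_split /= -[2%:R]/(1 + 1 : R) lerD //; apply: sum_pred_subsingleton_le1.
  by move=> x y /eqP -> /eqP.
by move=> x y /eqP xk /eqP yk; apply: val_inj; rewrite /= xk yk.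
Qed.

Lemma Dmx_unit : D \in unitmx.
Proof.
pose L : 'M[R]_N := \matrix_(i, j) (j <= i)%:R.
suff /mulmx1_unit[] : D *m L = 1%:M by [].
apply/matrixP => i j; rewrite !mxE.
rewrite (eq_bigr (fun m => D i m * (j < m.+1)%:R)); last first.
  by move=> m _; rewrite [L m j]mxE ltnS.
rewrite (Dmx_telescope (G := fun a => (j < a)%:R)) //.
by rewrite -(inj_eq val_inj) /= ltnS; case: ltngtP; rewrite ?subrr ?subr0.
Qed.

Lemma l1_Dtmul_le m (Z : 'M[R]_(N, m)) : l1 (D^T *m Z) <= 2%:R * l1 Z.
Proof. exact/l1_trmx_mul_le/Dmx_row_sum_le. Qed.

Lemma l1_mulD_le m (Z : 'M[R]_(m, N)) : l1 (Z *m D) <= 2%:R * l1 Z.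
Proof. by rewrite -l1_trmx trmx_mul -(l1_trmx Z) l1_Dtmul_le. Qed.

Lemma frob_Dtmul_le m (Z : 'M[R]_(N, m)) : frob (D^T *m Z) <= 2%:R * frob Z.
Proof. exact/frob_trmx_mul_le/ler0n/Dmx_col_sum_le/Dmx_row_sum_le. Qed.

Lemma frob_mulD_le m (Z : 'M[R]_(m, N)) : frob (Z *m D) <= 2%:R * frob Z.
Proof. by rewrite -frob_trmx trmx_mul -(frob_trmx Z) frob_Dtmul_le. Qed.

End DifferenceMatrix.

Section SigmaDelta.
Variables (R : realType) (N : nat).
Local Notation D := (Dmx R N).

Lemma ugetSS (u : 'M[R]_N) (i j : 'I_N) : uget u i.+1 j.+1 = u i j.
Proof.
rewrite /uget /= (insubT (fun k => k < N)%N (ltn_ord i)).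
rewrite (insubT (fun k => k < N)%N (ltn_ord j)).
by congr (u _ _); apply: val_inj.
Qed.

Lemma uget0r (u : 'M[R]_N) a : uget u a 0 = 0.
Proof. by rewrite /uget andbF. Qed.

Lemma Dmx_mul_mul_trE (u : 'M[R]_N) (i j : 'I_N) :
  (D *m u *m D^T) i j = uget u i.+1 j.+1 - uget u i j.+1 - uget u i.+1 j + uget u i j.
Proof.
rewrite mxE (eq_bigr (fun l : 'I_N => D j l * (uget u i.+1 l.+1 - uget u i l.+1))).
  rewrite (Dmx_telescope (G := fun b => uget u i.+1 b - uget u i b)) ?uget0r ?subrr //.
  ring.
move=> l _; rewrite [_^T l j]mxE [(D *m u) i l]mxE mulrC.
rewrite (eq_bigr (fun m : 'I_N => D i m * uget u m.+1 l.+1)); last first.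
  by move=> m _; rewrite ugetSS.
by rewrite (Dmx_telescope (G := fun a => uget u a l.+1)).
Qed.

Lemma sigma_delta_2D_residual (A : seq R) (X q u : 'M[R]_N) :
  sigma_delta_2D A X q u -> X - q = D *m u *m D^T.
Proof.
move=> sd; apply/matrixP => i j; rewrite Dmx_mul_mul_trE !mxE ugetSS.
have [_ ->] := sd i j; ring.
Qed.

End SigmaDelta.

Section Decoder.
Variables (R : realType) (N : nat) (delta : R) (q : 'M[R]_N).
Local Notation D := (Dmx R N).
Local Notation Dinv := (invmx (Dmx R N)).

Lemma feasible_of_residual (X u : 'M[R]_N) :
  X - q = D *m u *m D^T -> maxnorm u <= delta / 2%:R -> feasible delta q X.
Proof.
move=> res u_le; rewrite /feasible res -!mulmxA mulKmx ?Dmx_unit //.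
by rewrite -trmx_mul mulVmx ?Dmx_unit // trmx1 mulmx1.
Qed.

Lemma feasible_sub_le (Z Z' : 'M[R]_N) :
  feasible delta q Z -> feasible delta q Z' ->
  forall i j, `|(Dinv *m (Z - Z') *m Dinv^T) i j| <= delta.
Proof.
move=> fZ fZ' i j.
have -> : Z - Z' = (Z - q) - (Z' - q) by rewrite opprB addrA subrK.
rewrite mulmxBr mulmxBl.
move: fZ fZ'; rewrite /feasible.
set P := _ *m (Z - q) *m _; set P' := _ *m (Z' - q) *m _.
move=> fZ fZ'; rewrite [(P - P') i j]mxE [(- P') i j]mxE.
apply: le_trans (ler_normB _ _) _.
have := le_trans (normr_le_maxnorm P i j) fZ.
have := le_trans (normr_le_maxnorm P' i j) fZ'.
lra.
Qed.

Lemma frob_sqr_le_l1 (E : 'M[R]_N) :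
  0 <= delta -> (forall i j, `|(Dinv *m E *m Dinv^T) i j| <= delta) ->
  frob E ^+ 2 <= delta * (l1 (D^T *m E) + l1 (E *m D)).
Proof.
move=> delta_ge0 W_le; set W := Dinv *m E *m Dinv^T.
have EW : E = D *m W *m D^T.
  rewrite /W -!mulmxA mulKVmx ?Dmx_unit //.
  by rewrite -trmx_mul mulmxV ?Dmx_unit // trmx1 mulmx1.
have -> : frob E ^+ 2 = \tr ((D^T *m E *m D)^T *m W).
  rewrite frob_sqr_mxtrace {2}EW !mulmxA mxtrace_mulC !mulmxA.
  by rewrite !trmx_mul trmxK mulmxA.
apply: le_trans (ler_norm _) _; apply: le_trans (normr_mxtrace_mul_le _ W_le) _.
rewrite ler_wpM2l //.
have := l1_mulD_le (D^T *m E); have := l1_Dtmul_le (E *m D).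
rewrite mulmxA; lra.
Qed.

Lemma l1_error_le (X Xhat : 'M[R]_N) s :
  objective Xhat <= objective X ->
  l1 (D^T *m (Xhat - X)) + l1 ((Xhat - X) *m D) <=
    8%:R * Num.sqrt s%:R * frob (Xhat - X)
    + 2%:R * (sigma_s s (D^T *m X) + sigma_s s (X *m D)).
Proof.
rewrite /objective => opt.
have coneL := l1_le_cone_sigma (D^T *m X) (D^T *m (Xhat - X)) s.
have coneR := l1_le_cone_sigma (X *m D) ((Xhat - X) *m D) s.
rewrite -mulmxDr subrKC in coneL; rewrite -mulmxDl subrKC in coneR.
have := frob_Dtmul_le (Xhat - X); have := frob_mulD_le (Xhat - X).
have := sqrtr_ge0 (s%:R : R).
nra.
Qed.

End Decoder.

Theorem theorem4 (R : realType) :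
  exists C : R, forall (N : nat) (delta : R) (A : seq R)
    (X q u Xhat : 'M[R]_N),
    0 < delta ->
    alphabet_step A delta ->
    (forall i j, 0 <= X i j <= 1) ->
    sigma_delta_2D A X q u ->
    maxnorm u <= delta / 2 ->
    feasible delta q Xhat ->
    (forall Z, feasible delta q Z -> objective Xhat <= objective Z) ->
    forall s : nat, (1 <= s <= N ^ 2)%N ->
      frob (Xhat - X) <=
        C * (Num.sqrt s%:R * Num.sqrt delta
             + Num.sqrt (sigma_s s ((Dmx R N)^T *m X))
             + Num.sqrt (sigma_s s (X *m Dmx R N))) * Num.sqrt delta.
Proof.
exists 8%:R => N delta A X q u Xhat delta_gt0 _ _ sd u_le fXhat opt s _.
have fX := feasible_of_residual (sigma_delta_2D_residual sd) u_le.
have err_sqr := frob_sqr_le_l1 (ltW delta_gt0) (feasible_sub_le fXhat fX).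
have err_l1 := l1_error_le s (opt X fX).
apply: sqr_le_quadratic_bound; rewrite ?sqrtr_ge0 ?frob_ge0 //.
rewrite (sqr_sqrtr (ltW delta_gt0)) !(sqr_sqrtr (sigma_s_ge0 _ _)).
by apply: le_trans err_sqr _; rewrite ler_wpM2l ?(ltW delta_gt0) //; lra.
Qed.
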